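(* Let $n$ be a positive integer. There is a cardinal $\kappa$ such that every coalgebraic modal logic over $Q_n$ whose set $\Lambda$ of unary predicate liftings contains all $\lambda^{p,r,\hat A}$ ($p\in[0,1]$, $r\in\mathbb{R}$, $\hat A\in\mathrm{SA}_n$), and which has negation and conjunctions of all cardinalities less than $\kappa$, is expressive: for any $Q_n$-coalgebras $(X,\gamma)$, $(Y,\delta)$ and states $x\in X$, $y\in Y$ that are not behaviourally equivalent, there is a formula $\varphi$ with $x\in[\![\varphi]\!]_{X,\gamma}$ and $y\notin[\![\varphi]\!]_{Y,\delta}$.
   Context: $D$ is the finite distribution functor: $D(X)=\{d:X\to[0,1]\mid d\text{ has finite support},\ \sum_xd(x)=1\}$, $D(f)(d)(y)=\sum_{x:\,f(x)=y}d(x)$. $\mathrm{SA}_n$ is the set of self-adjoint operators on an $n$-dimensional complex Hilbert space; $Q_n(X)=D(\mathbb{R}\times X)^{\mathrm{SA}_n}$, acting on morphisms by postcomposition with $D(\mathrm{id}_\mathbb{R}\times f)$. $\lambda^{p,r,\hat A}_X(U)=\{f\in Q_n(X)\mid\sum_{u\in U}f(\hat A)(r,u)=p\}$. A unary predicate lifting for $Q_n$ is a family $\lambda_X:\mathcal{P}(X)\to\mathcal{P}(Q_nX)$ with $(Q_nf)^{-1}\lambda_Y(V)=\lambda_X(f^{-1}V)$. The coalgebraic modal logic with liftings $\Lambda$ and conjunction bound $\kappa$ has formulae $\top$, $\neg\varphi$, $\bigwedge_{i\in I}\varphi_i$ ($0<|I|<\kappa$), and $[\lambda]\varphi$ for $\lambda\in\Lambda$;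 on a coalgebra $(X,\gamma:X\to Q_nX)$, $[\![\top]\!]=X$, $\neg$ is complement, $\bigwedge$ is intersection, and $[\![[\lambda]\varphi]\!]_{X,\gamma}=\gamma^{-1}(\lambda_X([\![\varphi]\!]_{X,\gamma}))$. States $x\in X$, $y\in Y$ are behaviourally equivalent if there are a coalgebra $(Z,\zeta)$ and coalgebra morphisms $g:X\to Z$, $g':Y\to Z$ (maps with $\zeta\circ g=Q_ng\circ\gamma$, etc.) with $g(x)=g'(y)$. *)

From Stdlib Require Import Reals List.
From Stdlib Require Vectors.Fin.
Set Warnings "-stdlib-vector".
Import ListNotations.
Open Scope R_scope.

Record C : Type := mkC { Re : R ; Im : R }.
Definition Cconj (z : C) : C := mkC (Re z) (- Im z).

(** An operator on an n-dimensional complex Hilbert space, written as a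
    matrix in an orthonormal basis; self-adjoint = Hermitian matrix. *)
Definition Mat (n : nat) : Type := Fin.t n -> Fin.t n -> C.
Definition self_adjoint {n : nat} (M : Mat n) : Prop :=
  forall i j, M i j = Cconj (M j i).
Definition SA (n : nat) : Type := { M : Mat n | self_adjoint M }.

Definition sumR {A : Type} (g : A -> R) (l : list A) : R :=
  fold_right Rplus 0 (map g l).

Definition fin_sum {A : Type} (P : A -> Prop) (g : A -> R) (s : R) : Prop :=
  exists l : list A, NoDup l /\ (forall a, In a l <-> P a) /\ s = sumR g l.

Definition is_dist {A : Type} (d : A -> R) : Prop :=
  (forall a, 0 <= d a <= 1) /\
  exists l : list A, NoDup l /\ (forall a, d a <> 0 -> In a l) /\ sumR d l = 1.

Definition Dist (A : Type) : Type := { d : A -> R | is_dist d }.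

Definition dval {A : Type} (d : Dist A) : A -> R := proj1_sig d.

(** [D(f)(d) = d'], i.e. d'(b) = sum_{a : f a = b} d(a)  (the sum ranges over
    the finite support of d; zero terms do not matter). *)
Definition Dmap_rel {A B : Type} (f : A -> B) (d : Dist A) (d' : Dist B) : Prop :=
  forall b, fin_sum (fun a => dval d a <> 0 /\ f a = b) (dval d) (dval d' b).

Definition Q (n : nat) (X : Type) : Type := SA n -> Dist (R * X).

Definition Qmap_rel {n : nat} {X Y : Type} (f : X -> Y) (q : Q n X) (q' : Q n Y) : Prop :=
  forall A : SA n, Dmap_rel (fun v : R * X => (fst v, f (snd v))) (q A) (q' A).

Definition preimage {X Y : Type} (f : X -> Y) (V : Y -> Prop) : X -> Prop :=
  fun x => V (f x).

Record lifting (n : nat) : Type := mkLifting {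
  lift_fun : forall X : Type, (X -> Prop) -> (Q n X -> Prop);
  lift_natural : forall (X Y : Type) (f : X -> Y) (V : Y -> Prop) (q : Q n X) (q' : Q n Y),
      Qmap_rel f q q' -> (lift_fun Y V q' <-> lift_fun X (preimage f V) q)
}.
Arguments lift_fun {n} _ _ _ _.

Definition lambda_pra {n : nat} (p r : R) (A : SA n) (X : Type) (U : X -> Prop) (q : Q n X) : Prop :=
  fin_sum (fun u => U u /\ dval (q A) (r, u) <> 0) (fun u => dval (q A) (r, u)) p.

Definition card_le (I K : Type) : Prop :=
  exists f : I -> K, forall a b, f a = f b -> a = b.
Definition card_lt (I K : Type) : Prop := card_le I K /\ ~ card_le K I.

Inductive form (K L : Type) : Type :=
| FTop : form K L
| FNeg : form K L -> form K L
| FConj : forall I : Type, inhabited I -> card_lt I K -> (I -> form K L) -> form K L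
| FBox : L -> form K L -> form K L.
Arguments FTop {K L}.
Arguments FNeg {K L} _.
Arguments FConj {K L} I _ _ _.
Arguments FBox {K L} _ _.

Fixpoint sem {n : nat} {K L : Type} (lift : L -> lifting n)
    {X : Type} (gamma : X -> Q n X) (phi : form K L) : X -> Prop :=
  match phi with
  | @FTop _ _ => fun _ => True
  | FNeg psi => fun x => ~ sem lift gamma psi x
  | @FConj _ _ J _ _ f => fun x => forall i, sem lift gamma (f i) x
  | FBox l psi => fun x => lift_fun (lift l) X (sem lift gamma psi) (gamma x)
  end.

Definition coalg_morph {n : nat} {X Z : Type} (gamma : X -> Q n X) (zeta : Z -> Q n Z)
    (g : X -> Z) : Prop :=
  forall x, Qmap_rel g (gamma x) (zeta (g x)).

Definition beh_equiv {n : nat} {X Y : Type} (gamma : X -> Q n X) (delta : Y -> Q n Y)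
    (x : X) (y : Y) : Prop :=
  exists (Z : Type) (zeta : Z -> Q n Z) (g : X -> Z) (g' : Y -> Z),
    coalg_morph gamma zeta g /\ coalg_morph delta zeta g' /\ g x = g' y.

(* Two states are identified when they satisfy the same formulas of the finitary logic
   (conjunctions over finite index sets, so kappa = omega suffices); the theories of states
   then carry a coalgebra structure making both theory maps coalgebra morphisms.  The crux is
   that equal theories have equal images under Q_n(theory): since every distribution has finite
   support, for any theory z a finite conjunction of formulas defines {u | theory u = z} on the
   relevant supports, and the modality [lambda^{p,r,A}] then detects the mass p that f(A)
   assigns to (r, z). *)
From Stdlib Require Import Reals List FinFun Lra Lia Classical ClassicalEpsilon FunctionalExtensionality PropExtensionality ProofIrrelevance.
Import ListNotations.
Open Scope R_scope.

Definition dec (P : Prop) : bool := if excluded_middle_informative P then true else false.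

Lemma dec_true (P : Prop) : dec P = true <-> P.
Proof. unfold dec; destruct (excluded_middle_informative P); split; easy. Qed.

Lemma dec_false (P : Prop) : dec P = false <-> ~ P.
Proof. unfold dec; destruct (excluded_middle_informative P); split; easy. Qed.

Lemma sumR_nil {A} (g : A -> R) : sumR g [] = 0.
Proof. reflexivity. Qed.

Lemma sumR_cons {A} (g : A -> R) a l : sumR g (a :: l) = g a + sumR g l.
Proof. reflexivity. Qed.

Lemma sumR_app {A} (g : A -> R) (l1 l2 : list A) : sumR g (l1 ++ l2) = sumR g l1 + sumR g l2.
Proof.
  induction l1 as [|a l1 IH]; [simpl app; rewrite sumR_nil; ring|].
  simpl app. rewrite !sumR_cons, IH. ring.
Qed.

Lemma sumR_ext {A} (g1 g2 : A -> R) l :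
  (forall a, In a l -> g1 a = g2 a) -> sumR g1 l = sumR g2 l.
Proof.
  induction l as [|a l IH]; intros H; [reflexivity|].
  rewrite !sumR_cons, (H a), IH; [reflexivity | intros; apply H; simpl; auto | left; auto].
Qed.

Lemma sumR_plus {A} (h1 h2 : A -> R) l : sumR (fun b => h1 b + h2 b) l = sumR h1 l + sumR h2 l.
Proof. induction l as [|a l IH]; [rewrite !sumR_nil; ring | rewrite !sumR_cons, IH; ring]. Qed.

Lemma sumR_zero {A} (l : list A) : sumR (fun _ => 0) l = 0.
Proof. induction l as [|a l IH]; [reflexivity | rewrite sumR_cons, IH; ring]. Qed.

Lemma sumR_nonneg {A} (g : A -> R) l : (forall a, 0 <= g a) -> 0 <= sumR g l.
Proof.
  intros H; induction l as [|a l IH]; [rewrite sumR_nil; lra|].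
  rewrite sumR_cons. specialize (H a). lra.
Qed.

Lemma sumR_incl_le {A} (g : A -> R) l' l :
  (forall a, 0 <= g a) -> NoDup l' -> incl l' l -> sumR g l' <= sumR g l.
Proof.
  revert l; induction l' as [|a l' IH]; intros l Hg N Hi.
  - apply sumR_nonneg; auto.
  - inversion N as [|? ? Hnin Nd]; subst.
    destruct (in_split a l (Hi a (or_introl eq_refl))) as [l1 [l2 ->]].
    assert (Hle : sumR g l' <= sumR g (l1 ++ l2)).
    { apply IH; auto. intros x Hx.
      destruct (in_app_or _ _ _ (Hi x (or_intror Hx))) as [H|[H|H]];
        [apply in_or_app; auto | subst; contradiction | apply in_or_app; auto]. }
    rewrite sumR_app in Hle |- *. rewrite !sumR_cons. lra.
Qed.

Lemma sumR_indicator {A} (c : A) v l :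
  NoDup l -> In c l -> sumR (fun b => if dec (c = b) then v else 0) l = v.
Proof.
  induction l as [|a l IH]; intros N Hc; [destruct Hc|].
  inversion N as [|? ? Hnin Nd]; subst. rewrite sumR_cons. destruct Hc as [<-|Hc].
  - rewrite (proj2 (dec_true (a = a))) by reflexivity.
    rewrite (sumR_ext _ (fun _ => 0)), sumR_zero; [ring|].
    intros b Hb. rewrite (proj2 (dec_false (a = b))); auto. intros ->; contradiction.
  - rewrite (proj2 (dec_false (c = a))), IH; auto; [ring|]. intros ->; contradiction.
Qed.

(* Zero terms are dropped from the fibers, so only the support of [g] must land in [lB]. *)
Lemma sumR_fibers {A B} (g : A -> R) (f : A -> B) (lB : list B) l :
  NoDup lB -> (forall a, In a l -> g a <> 0 -> In (f a) lB) ->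
  sumR g l = sumR (fun b => sumR g (filter (fun a => dec (g a <> 0 /\ f a = b)) l)) lB.
Proof.
  intros NB; induction l as [|a l IH]; intros H.
  - symmetry; apply sumR_zero.
  - rewrite sumR_cons, IH by (intros; apply H; simpl; auto).
    destruct (classic (g a = 0)) as [Z|NZ].
    + rewrite Z, Rplus_0_l. apply sumR_ext; intros b _. simpl.
      rewrite (proj2 (dec_false _)) by tauto. reflexivity.
    + transitivity (sumR (fun b => (if dec (f a = b) then g a else 0) +
          sumR g (filter (fun a => dec (g a <> 0 /\ f a = b)) l)) lB).
      * rewrite sumR_plus, sumR_indicator; auto. apply H; simpl; auto.
      * apply sumR_ext. intros b _. simpl. destruct (classic (f a = b)).
        -- rewrite !(proj2 (dec_true _)) by auto. reflexivity.
        -- rewrite !(proj2 (dec_false _)) by tauto. ring.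
Qed.

Lemma fin_sum_filter {A} (P : A -> Prop) g l :
  NoDup l -> (forall a, P a -> In a l) -> fin_sum P g (sumR g (filter (fun a => dec (P a)) l)).
Proof.
  intros N H. exists (filter (fun a => dec (P a)) l).
  split; [apply NoDup_filter; auto|]. split; [|reflexivity].
  intro a; rewrite filter_In, dec_true; split; [tauto|]. intro p; split; auto.
Qed.

Lemma fin_sum_dist_le1 {A} (d : Dist A) (P : A -> Prop) s :
  (forall a, P a -> dval d a <> 0) -> fin_sum P (dval d) s -> 0 <= s <= 1.
Proof.
  intros HP [l' [N' [I' ->]]].
  destruct d as [d [Hb [l [N [Hs E]]]]]; unfold dval in *; simpl in *.
  split; [apply sumR_nonneg; intro a; apply Hb|].
  rewrite <- E. apply sumR_incl_le; auto; [intro a; apply Hb|].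
  intros a Ha. apply Hs, HP, I', Ha.
Qed.

Lemma fin_sum_inj_image {A B} (P : A -> Prop) (P' : B -> Prop) (g : A -> R) (g' : B -> R)
    (h : A -> B) s :
  fin_sum P g s ->
  (forall a b, P a -> P b -> h a = h b -> a = b) ->
  (forall b, P' b <-> exists a, P a /\ h a = b) ->
  (forall a, P a -> g' (h a) = g a) ->
  fin_sum P' g' s.
Proof.
  intros [l [N [I ->]]] Hinj HP' Hg.
  assert (Hl : forall a, In a l -> P a) by (intro; apply I).
  exists (map h l). split; [|split].
  - clear HP' Hg I. induction l as [|a l IH]; simpl; constructor; inversion N; subst.
    + intros [a' [E Hin']]%in_map_iff.
      assert (a' = a) by (apply Hinj; auto; apply Hl; simpl; auto). subst; contradiction.
    + apply IH; auto. intros; apply Hl; simpl; auto.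
  - intro b. rewrite HP', in_map_iff.
    split; intros [a [H1 H2]]; exists a; split; try apply I; auto.
  - clear - Hl Hg. induction l as [|a l IH]; [reflexivity|]. simpl map. rewrite !sumR_cons.
    rewrite IH, Hg by (intros; apply Hl; simpl; auto). reflexivity.
Qed.

Lemma Dmap_exists {A B} (f : A -> B) (d : Dist A) : exists d' : Dist B, Dmap_rel f d d'.
Proof.
  destruct (proj2_sig d) as [Hb [l [N [Hs E]]]]. fold (dval d) in *.
  pose (fiber := fun b => filter (fun a => dec (dval d a <> 0 /\ f a = b)) l).
  assert (Hfiber : forall a b, In a (fiber b) -> dval d a <> 0 /\ f a = b).
  { intros a b Ha. apply filter_In in Ha as [_ Ha]. apply dec_true, Ha. }
  assert (Hd : is_dist (fun b => sumR (dval d) (fiber b))).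
  { split; [intro b; split|].
    - apply sumR_nonneg; intro; apply Hb.
    - rewrite <- E. apply sumR_incl_le; [intro; apply Hb | apply NoDup_filter; auto |].
      intros a Ha; apply filter_In in Ha; tauto.
    - exists (nodup (fun u v => excluded_middle_informative (u = v)) (map f l)).
      split; [apply NoDup_nodup|]. split.
      + intros b Hb'. destruct (fiber b) as [|a0 rest] eqn:F; [contradiction|].
        destruct (Hfiber a0 b) as [Ha0 <-]; [rewrite F; left; auto|].
        apply nodup_In, in_map, Hs, Ha0.
      + rewrite <- E. symmetry. apply sumR_fibers; [apply NoDup_nodup|].
        intros a Ha _. apply nodup_In, in_map; auto. }
  exists (exist _ _ Hd). intro b. apply fin_sum_filter; auto. intros a [Ha _]; auto.
Qed.

Lemma Qmap_exists {n X Y} (f : X -> Y) (q : Q n X) : exists q' : Q n Y, Qmap_rel f q q'.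
Proof. exact (choice _ (fun A => Dmap_exists _ (q A))). Qed.

(* The pushforward mass at [(r, z)] as a [lambda_pra] mass: [Phi] need only cut out the fiber of
   [t] over [z] on the support of [d] at [r]. *)
Lemma fiber_mass_iff {X Z} (d : Dist (R * X)) (t : X -> Z) (Phi : X -> Prop) r z s :
  (forall u, dval d (r, u) <> 0 -> (Phi u <-> t u = z)) ->
  (fin_sum (fun a => dval d a <> 0 /\ (fst a, t (snd a)) = (r, z)) (dval d) s <->
   fin_sum (fun u => Phi u /\ dval d (r, u) <> 0) (fun u => dval d (r, u)) s).
Proof.
  intros HPhi. split; intro H.
  - apply (fin_sum_inj_image _ _ _ _ snd _ H).
    + intros [ra ua] [rb ub] [_ Ea] [_ Eb]; simpl in *. intros ->.
      injection Ea as -> _. injection Eb as -> _. reflexivity.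
    + intro u. split.
      * intros [Pu Du]. exists (r, u). simpl. repeat split; auto. f_equal. apply HPhi; auto.
      * intros [[ra ua] [[Da Ea] <-]]. simpl in *. injection Ea as -> Ea.
        split; auto. apply HPhi; auto.
    + intros [ra ua] [_ Ea]; simpl in *. injection Ea as -> _. reflexivity.
  - apply (fin_sum_inj_image _ _ _ _ (fun u => (r, u)) _ H).
    + intros a b _ _ E. injection E; auto.
    + intros [ra ua]. simpl. split.
      * intros [Da Ea]. injection Ea as -> Ea. exists ua. repeat split; auto. apply HPhi; auto.
      * intros [u [[Pu Du] Eu]]. injection Eu as <- <-. split; auto. f_equal. apply HPhi; auto.
    + intros; reflexivity.
Qed.

Lemma card_lt_fin_nat (m : nat) : card_lt {k : nat | (k < m)%nat} nat.
Proof.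
  split.
  - exists (@proj1_sig _ _). intros [a Ha] [b Hb]; simpl; intros ->.
    f_equal; apply proof_irrelevance.
  - intros [h Hh].
    assert (Nd : NoDup (map (fun i => proj1_sig (h i)) (seq 0 (S m)))).
    { apply Injective_map_NoDup; [|apply seq_NoDup]. intros i j E. apply Hh.
      destruct (h i) as [a pa], (h j) as [b pb]; simpl in E; subst b.
      f_equal; apply proof_irrelevance. }
    apply NoDup_incl_length with (l' := seq 0 m) in Nd.
    + rewrite length_map, !length_seq in Nd. lia.
    + intros a Ha. apply in_map_iff in Ha as [i [<- _]]. apply in_seq. destruct (h i); simpl; lia.
Qed.

Section Theories.

Variables (n : nat) (L : Type) (lift : L -> lifting n).

(* The index set of the conjunction also covers a leading [FTop], so it is never empty. *)
Definition conj_list (chis : list (form nat L)) : form nat L :=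
  FConj {k : nat | (k < S (length chis))%nat}
    (inhabits (exist _ 0%nat (Nat.lt_0_succ _))) (card_lt_fin_nat _)
    (fun k => nth (proj1_sig k) (FTop :: chis) FTop).

Lemma sem_conj_list {X} (g : X -> Q n X) chis u :
  sem lift g (conj_list chis) u <-> forall chi, In chi chis -> sem lift g chi u.
Proof.
  unfold conj_list; cbn [sem]. split.
  - intros Hs chi Hin. destruct (In_nth chis chi FTop Hin) as [k [Hk <-]].
    exact (Hs (exist _ (S k) (proj1 (Nat.succ_lt_mono _ _) Hk))).
  - intros Hall [[|k] Hk]; simpl; [exact I|].
    apply Hall, nth_In. simpl in Hk. lia.
Qed.

Definition theory {X} (g : X -> Q n X) (u : X) : form nat L -> Prop :=
  fun phi => sem lift g phi u.

Definition neg_complete (z : form nat L -> Prop) : Prop :=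
  forall chi, z (FNeg chi) <-> ~ z chi.

Lemma theory_neg_complete {X} (g : X -> Q n X) u : neg_complete (theory g u).
Proof. intro chi; reflexivity. Qed.

Lemma theory_eq_of_implies {X Y} (gamma : X -> Q n X) (delta : Y -> Q n Y) x y :
  (forall phi : form nat L, sem lift gamma phi x -> sem lift delta phi y) ->
  theory gamma x = theory delta y.
Proof.
  intros Himp. apply functional_extensionality; intro phi. apply propositional_extensionality.
  split; [apply Himp|]. intros Hd. apply NNPP; intro Hg. exact (Himp (FNeg phi) Hg Hd).
Qed.

Lemma separating_formula {X} (g : X -> Q n X) u z :
  neg_complete z -> theory g u <> z -> exists chi, z chi /\ ~ sem lift g chi u.
Proof.
  intros Hz NE.
  assert (Hchi : exists chi, ~ (theory g u chi <-> z chi)).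
  { apply not_all_ex_not. intro Hall. apply NE, functional_extensionality; intro chi.
    apply propositional_extensionality, Hall. }
  destruct Hchi as [chi Hchi]. unfold theory in Hchi.
  destruct (classic (z chi)) as [Zc|Zc].
  - exists chi. tauto.
  - exists (FNeg chi). split; [apply Hz; auto | simpl; tauto].
Qed.

Lemma separating_formulas {X} (g : X -> Q n X) (l : list X) z :
  neg_complete z ->
  exists chis, (forall chi, In chi chis -> z chi) /\
    forall u, In u l -> (forall chi, In chi chis -> sem lift g chi u) -> theory g u = z.
Proof.
  intros Hz. induction l as [|u l [chis [Hchis Hsep]]].
  - exists []. split; intros ? [].
  - destruct (classic (theory g u = z)) as [E|NE].
    + exists chis. split; auto. intros v [<-|Hv]; auto.
    + destruct (separating_formula g u z Hz NE) as [chi [Zc Nc]].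
      exists (chi :: chis). split; [intros ? [<-|?]; auto|].
      intros v [<-|Hv] Hs; [exfalso; apply Nc, Hs; left; auto|].
      apply Hsep; auto. intros; apply Hs; right; auto.
Qed.

Lemma characteristic_formula {X1 X2} (g1 : X1 -> Q n X1) (g2 : X2 -> Q n X2)
    (l1 : list X1) (l2 : list X2) z :
  exists phi : form nat L,
    (forall u, In u l1 -> (sem lift g1 phi u <-> theory g1 u = z)) /\
    (forall u, In u l2 -> (sem lift g2 phi u <-> theory g2 u = z)).
Proof.
  destruct (classic (neg_complete z)) as [Hz|Hz].
  2: { exists (FNeg FTop). split; intros u _; simpl; split; try tauto;
       intros <-; exfalso; apply Hz, theory_neg_complete. }
  destruct (separating_formulas g1 l1 z Hz) as [chis1 [Z1 S1]].
  destruct (separating_formulas g2 l2 z Hz) as [chis2 [Z2 S2]].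
  exists (conj_list (chis1 ++ chis2)).
  assert (Z12 : forall chi, In chi (chis1 ++ chis2) -> z chi)
    by (intros chi [H|H]%in_app_or; auto).
  split; intros u Hu; rewrite sem_conj_list; split.
  - intros Hs. apply S1; auto. intros; apply Hs, in_or_app; auto.
  - intros <- chi Hin. exact (Z12 chi Hin).
  - intros Hs. apply S2; auto. intros; apply Hs, in_or_app; auto.
  - intros <- chi Hin. exact (Z12 chi Hin).
Qed.

Hypothesis lift_lambda : forall (p r : R) (A : SA n), 0 <= p <= 1 ->
  exists l : L, forall (X : Type) (U : X -> Prop) (q : Q n X),
    lift_fun (lift l) X U q <-> lambda_pra p r A X U q.

Lemma theory_Qmap_transfer {X1 X2} (g1 : X1 -> Q n X1) (g2 : X2 -> Q n X2) s1 s2 q :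
  theory g1 s1 = theory g2 s2 ->
  Qmap_rel (theory g2) (g2 s2) q -> Qmap_rel (theory g1) (g1 s1) q.
Proof.
  intros E Hq A [r z].
  set (s := dval (q A) (r, z)). specialize (Hq A (r, z)); fold s in Hq.
  destruct (proj2_sig (g1 s1 A)) as [_ [k1 [_ [Supp1 _]]]].
  destruct (proj2_sig (g2 s2 A)) as [_ [k2 [_ [Supp2 _]]]].
  destruct (characteristic_formula g1 g2 (map snd k1) (map snd k2) z) as [phi [P1 P2]].
  assert (Hs : 0 <= s <= 1) by (eapply fin_sum_dist_le1; [|exact Hq]; intros a [Ha _]; exact Ha).
  destruct (lift_lambda s r A Hs) as [l Hl].
  assert (Box2 : theory g2 s2 (FBox l phi)).
  { apply Hl. refine (proj1 (fiber_mass_iff _ (theory g2) _ r z s _) Hq).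
    intros u Hu. apply P2, in_map_iff. exists (r, u); auto. }
  rewrite <- E in Box2. apply Hl in Box2.
  refine (proj2 (fiber_mass_iff _ (theory g1) _ r z s _) Box2).
  intros u Hu. apply P1, in_map_iff. exists (r, u); auto.
Qed.

Lemma theory_cospan {X Y} (gamma : X -> Q n X) (delta : Y -> Q n Y) :
  inhabited X ->
  exists zeta, coalg_morph gamma zeta (theory gamma) /\ coalg_morph delta zeta (theory delta).
Proof.
  intros [x0].
  destruct (Qmap_exists (theory gamma) (gamma x0)) as [q0 _].
  pose (image := fun z q =>
    (exists x, theory gamma x = z /\ Qmap_rel (theory gamma) (gamma x) q) \/
    (exists y, theory delta y = z /\ Qmap_rel (theory delta) (delta y) q)).
  destruct (choice (fun z q => (exists q', image z q') -> image z q)) as [zeta Hzeta].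
  { intro z. destruct (classic (exists q', image z q')) as [[q' Hq']|Hno].
    - exists q'; auto.
    - exists q0; tauto. }
  assert (Hmorph : forall W (g : W -> Q n W) w,
      image (theory g w) (zeta (theory g w)) -> Qmap_rel (theory g) (g w) (zeta (theory g w))).
  { intros W g w [[v [E Hv]]|[v [E Hv]]]; exact (theory_Qmap_transfer g _ w v _ (eq_sym E) Hv). }
  exists zeta. split.
  - intro x. apply Hmorph, Hzeta. destruct (Qmap_exists (theory gamma) (gamma x)) as [q Hq].
    exists q. left. exists x; auto.
  - intro y. apply Hmorph, Hzeta. destruct (Qmap_exists (theory delta) (delta y)) as [q Hq].
    exists q. right. exists y; auto.
Qed.

End Theories.

Theorem mainTheorem15 (n : nat) (hn : (0 < n)%nat) :
  exists K : Type,
    forall (L : Type) (lift : L -> lifting n),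
      (forall (p r : R) (A : SA n), 0 <= p <= 1 ->
         exists l : L, forall (X : Type) (U : X -> Prop) (q : Q n X),
           lift_fun (lift l) X U q <-> lambda_pra p r A X U q) ->
      forall (X : Type) (gamma : X -> Q n X) (Y : Type) (delta : Y -> Q n Y)
             (x : X) (y : Y),
        ~ beh_equiv gamma delta x y ->
        exists phi : form K L, sem lift gamma phi x /\ ~ sem lift delta phi y.
Proof.
  exists nat. intros L lift HL X gamma Y delta x y Hnb.
  apply NNPP; intro Hno. apply Hnb.
  destruct (theory_cospan n L lift HL gamma delta (inhabits x)) as [zeta [Mg Md]].
  exists _, zeta, (theory n L lift gamma), (theory n L lift delta). split; [exact Mg|]. split; [exact Md|].
  apply theory_eq_of_implies. intros phi Hs.
  apply NNPP; intro Hd. apply Hno. exists phi; auto.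
Qed.
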